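(* Consider a credit-attribution game with authors $N=\{1,\dots,n\}$ and let $x\in N$. As a function of the reliabilities $p=(p_1,\dots,p_n)\in[0,1]^n$, the Shapley value $Sh[\overline{v_{FC}}](x)$ of $x$ in the reliability extension of the full credit game is monotonically decreasing in the reliability $p_j$ of each coauthor $j\in CA(x)$, and the Shapley value $Sh[\overline{v_{FO}}](x)$ in the reliability extension of the full obligation game is monotonically increasing in each $p_j$, $j\in CA(x)$; neither depends on $p_j$ for $j\notin CA(x)\cup\{x\}$.
   Context: A credit-attribution game has authors $N$ and papers $P_1,\dots,P_m$, paper $P_k$ having author set $Auth_k$ and weight $w_k\in\mathbb{R}_+$. $Pap_x$ is the set of papers of $x$ and $CA(x)$ the set of coauthors of $x$, i.e. players $l\ne x$ sharing a paper with $x$. $v_{FC}(S)=\sum\{w_k:Auth_k\cap S\ne\emptyset\}$, $v_{FO}(S)=\sum\{w_k:Auth_k\subseteq S\}$. For $T\subseteq S$, $\Pi_{T,S}=\prod_{i\in T}p_i\prod_{i\in S\setminus T}(1-p_i)$; reliability extension $\overline v(S)=\sum_{T\subseteq S}v(T)\Pi_{T,S}$. Shapley value $Sh[v](x)=\frac1{n!}\sum_\pi[v(S^x_\pi\cup\{x\})-v(S^x_\pi)]$ over permutations $\pi$, $S^x_\pi$ the players preceding $x$. *)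

From mathcomp Require Import all_boot all_order all_fingroup all_algebra.
Set Implicit Arguments. Unset Strict Implicit. Unset Printing Implicit Defensive.
Import Order.TTheory GRing.Theory Num.Theory.
Local Open Scope ring_scope.

Section CreditGame.
Variables (R : realFieldType) (n m : nat).
(* authors are 'I_n, papers are 'I_m *)
Variables (Auth : 'I_m -> {set 'I_n}) (w : 'I_m -> R).

Definition vFC (S : {set 'I_n}) : R := \sum_(k | Auth k :&: S != set0) w k.
Definition vFO (S : {set 'I_n}) : R := \sum_(k | Auth k \subset S) w k.

Definition coauthors (x : 'I_n) : {set 'I_n} :=
  [set l | (l != x) && [exists k, (x \in Auth k) && (l \in Auth k)]].
End CreditGame.

Section Generic.
Variables (R : realFieldType) (n : nat).

Definition PiTS (p : 'I_n -> R) (T S : {set 'I_n}) : R :=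
  (\prod_(i in T) p i) * \prod_(i in S :\: T) (1 - p i).

Definition rext (v : {set 'I_n} -> R) (p : 'I_n -> R) (S : {set 'I_n}) : R :=
  \sum_(T in powerset S) v T * PiTS p T S.

(* players preceding x in the ordering given by s (s i = position of i) *)
Definition preceding (s : {perm 'I_n}) (x : 'I_n) : {set 'I_n} :=
  [set y | (nat_of_ord (s y) < nat_of_ord (s x))%N].

Definition shapley (v : {set 'I_n} -> R) (x : 'I_n) : R :=
  (n`!%:R)^-1 *
  \sum_(s : {perm 'I_n}) (v (x |: preceding s x) - v (preceding s x)).
End Generic.

From mathcomp Require Import all_boot all_order all_fingroup all_algebra.
From mathcomp Require Import ring.
Import Order.TTheory GRing.Theory Num.Theory.
Local Open Scope ring_scope.

(* The reliability extension is the expectation of v on the random subset of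
   S in which each i survives independently with probability p_i.  Expanding a
   product of binomials over the subsets of S shows that it is multiplicative
   on games of the form T |-> prod_(i in T) f_i * prod_(i in S\T) g_i.  The
   credit of a single paper with author set A is 1 minus such a game and its
   obligation is [A ⊆ S] times another, so the marginal contribution of x to a
   coalition P not containing x is a sum over the papers A of x of
     w p_x prod_(i in P ∩ A) (1 - p_i)   resp.   w [A ⊆ P ∪ {x}] prod_(i in A) p_i.
   The first is antitone and the second monotone in each p_j with j ≠ x, and
   neither involves p_j for j outside the papers of x; the Shapley value is an
   average of marginal contributions. *)

Section ReliabilityExtension.
Variables (R : realFieldType) (n : nat).
Implicit Types (p f g : 'I_n -> R) (A S T : {set 'I_n}).

Lemma prod_add_powerset (a b : 'I_n -> R) S :
  \prod_(i in S) (a i + b i) =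
  \sum_(T in powerset S) (\prod_(i in T) a i) * \prod_(i in S :\: T) b i.
Proof.
pose a' i := if i \in S then a i else 0.
pose b' i := if i \in S then b i else 1.
transitivity (\prod_i (a' i + b' i)).
  by rewrite big_mkcond; apply: eq_bigr => i _; rewrite /a' /b'; case: ifP; rewrite ?add0r.
rewrite bigA_distr [RHS]big_mkcond; apply: eq_bigr => T _; rewrite powersetE.
have [TS | /subsetPn[i iT iS]] := boolP (T \subset S); last first.
  by rewrite (bigD1 i) //= iT /a' (negbTE iS) mul0r.
rewrite (bigID (mem T)) /=; congr (_ * _).
  by apply: eq_bigr => i iT; rewrite iT /a' (subsetP TS).
rewrite [LHS]big_mkcond [RHS]big_mkcond; apply: eq_bigr => i _ /=.
by rewrite inE /b'; case: (i \in T); case: (i \in S).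
Qed.

Lemma sum_PiTS_prod p f g S :
  \sum_(T in powerset S) (\prod_(i in T) f i * \prod_(i in S :\: T) g i) * PiTS p T S =
  \prod_(i in S) (p i * f i + (1 - p i) * g i).
Proof.
rewrite prod_add_powerset; apply: eq_bigr => T _.
by rewrite /PiTS !big_split /= mulrACA; congr (_ * _); apply: mulrC.
Qed.

Lemma sum_PiTS p S : \sum_(T in powerset S) PiTS p T S = 1.
Proof.
transitivity (\prod_(i in S) (p i * 1 + (1 - p i) * 1)).
  by rewrite -sum_PiTS_prod; apply: eq_bigr => T _; rewrite !big1_eq mulr1 mul1r.
by apply: big1 => i _; rewrite !mulr1 addrC subrK.
Qed.

Lemma prod_setI A S (G : 'I_n -> R) :
  \prod_(i in S :&: A) G i = \prod_(i in S) (if i \in A then G i else 1).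
Proof. by rewrite -big_mkcondr; apply: eq_bigl => i; rewrite inE. Qed.

Lemma prod_indicator_notin A T :
  \prod_(i in T) (i \notin A)%:R = [disjoint A & T]%:R :> R.
Proof.
rewrite -setI_eq0 -cards_eq0 -expr0n -prodr_const setIC prod_setI.
by apply: eq_bigr => i _; case: (i \in A).
Qed.

Lemma rext_meet A p S :
  rext (fun T => (A :&: T != set0)%:R) p S = 1 - \prod_(i in S :&: A) (1 - p i).
Proof.
rewrite /rext; transitivity (\sum_(T in powerset S) PiTS p T S -
  \sum_(T in powerset S) (\prod_(i in T) (i \notin A)%:R * \prod_(i in S :\: T) 1) * PiTS p T S).
  rewrite -sumrB; apply: eq_bigr => T _.
  rewrite big1_eq mulr1 prod_indicator_notin -setI_eq0 -[X in _ = X - _]mul1r -mulrBl.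
  by case: (A :&: T == set0); rewrite /= ?subrr ?subr0.
rewrite sum_PiTS sum_PiTS_prod prod_setI.
congr (1 - _); apply: eq_bigr => i _.
by case: (i \in A); rewrite /= !mulr1 ?(mulr0, add0r) // addrC subrK.
Qed.

Lemma rext_sub A p S :
  rext (fun T => (A \subset T)%:R) p S = (A \subset S)%:R * \prod_(i in A) p i.
Proof.
transitivity ((A \subset S)%:R * \sum_(T in powerset S)
  (\prod_(i in T) 1 * \prod_(i in S :\: T) (i \notin A)%:R) * PiTS p T S).
  rewrite /rext mulr_sumr; apply: eq_bigr => T; rewrite powersetE => TS.
  rewrite big1_eq mul1r prod_indicator_notin mulrA -natrM mulnb -subsetD.
  by rewrite setDDr setDv set0U (setIidPr TS).
rewrite sum_PiTS_prod; have [AS | _] := boolP (A \subset S); last by rewrite !mul0r.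
rewrite !mul1r -[in RHS](setIidPr AS) prod_setI; apply: eq_bigr => i _.
by case: (i \in A); rewrite /= !mulr1 ?(mulr0, addr0) // addrC subrK.
Qed.

Lemma rext_sum (I : finType) (c : I -> R) (u : I -> {set 'I_n} -> R) v p S :
  (forall T, v T = \sum_k c k * u k T) ->
  rext v p S = \sum_k c k * rext (u k) p S.
Proof.
move=> vE; rewrite /rext; under eq_bigr do rewrite vE mulr_suml.
rewrite exchange_big; apply: eq_bigr => k _; rewrite mulr_sumr.
by apply: eq_bigr => T _; rewrite mulrA.
Qed.

End ReliabilityExtension.

Section Shapley.
Variables (R : realFieldType) (n : nat).
Implicit Types (u v : {set 'I_n} -> R) (x : 'I_n) (P : {set 'I_n}).

Lemma notin_preceding (s : {perm 'I_n}) x : x \notin preceding s x.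
Proof. by rewrite inE ltnn. Qed.

Lemma ler_shapley u v x :
  (forall P, x \notin P -> u (x |: P) - u P <= v (x |: P) - v P) ->
  shapley u x <= shapley v x.
Proof.
move=> le_uv; rewrite /shapley ler_wpM2l ?invr_ge0 ?ler0n //.
by apply: ler_sum => s _; apply/le_uv/notin_preceding.
Qed.

Lemma eq_shapley u v x :
  (forall P, x \notin P -> u (x |: P) - u P = v (x |: P) - v P) ->
  shapley u x = shapley v x.
Proof.
move=> eq_uv; rewrite /shapley; congr (_ * _).
by apply: eq_bigr => s _; apply/eq_uv/notin_preceding.
Qed.
End Shapley.

Section CreditGame.
Variables (R : realFieldType) (n m : nat).
Variables (Auth : 'I_m -> {set 'I_n}) (w : 'I_m -> R).
Implicit Types (p q : 'I_n -> R) (x : 'I_n) (P S : {set 'I_n}).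

Lemma rext_vFC p S :
  rext (vFC Auth w) p S = \sum_k w k * (1 - \prod_(i in S :&: Auth k) (1 - p i)).
Proof.
rewrite (@rext_sum _ _ _ w (fun k T => (Auth k :&: T != set0)%:R)).
  by apply: eq_bigr => k _; rewrite rext_meet.
by move=> T; rewrite /vFC big_mkcond; apply: eq_bigr => k _; case: ifP; rewrite ?mulr1 ?mulr0.
Qed.

Lemma rext_vFO p S :
  rext (vFO Auth w) p S = \sum_k w k * ((Auth k \subset S)%:R * \prod_(i in Auth k) p i).
Proof.
rewrite (@rext_sum _ _ _ w (fun k T => (Auth k \subset T)%:R)).
  by apply: eq_bigr => k _; rewrite rext_sub.
by move=> T; rewrite /vFO big_mkcond; apply: eq_bigr => k _; case: ifP; rewrite ?mulr1 ?mulr0.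
Qed.

Lemma marginal_rext_vFC p x P : x \notin P ->
  rext (vFC Auth w) p (x |: P) - rext (vFC Auth w) p P =
  \sum_(k | x \in Auth k) w k * (p x * \prod_(i in P :&: Auth k) (1 - p i)).
Proof.
move=> xP; rewrite !rext_vFC -sumrB [RHS]big_mkcond; apply: eq_bigr => k _.
by rewrite !prod_setI big_setU1 //=; case: ifP => _; ring.
Qed.

Lemma marginal_rext_vFO p x P : x \notin P ->
  rext (vFO Auth w) p (x |: P) - rext (vFO Auth w) p P =
  \sum_(k | x \in Auth k) w k * ((Auth k \subset x |: P)%:R * \prod_(i in Auth k) p i).
Proof.
move=> xP; rewrite !rext_vFO -sumrB [RHS]big_mkcond; apply: eq_bigr => k _.
rewrite -[in Auth k \subset P](setU1K xP) subsetD1.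
by case: (x \in Auth k); rewrite /= ?andbT ?andbF ?subrr // mulr0n mul0r mulr0 subr0.
Qed.

Lemma shapley_rext_vFC_local p q x :
  (forall k, x \in Auth k -> {in Auth k, p =1 q}) ->
  shapley (rext (vFC Auth w) p) x = shapley (rext (vFC Auth w) q) x.
Proof.
move=> epq; apply: eq_shapley => P xP; rewrite !marginal_rext_vFC //.
apply: eq_bigr => k xA; rewrite (epq k xA x xA); congr (_ * (_ * _)).
by apply: eq_bigr => i; rewrite inE => /andP[_ iA]; rewrite (epq k xA i iA).
Qed.

Lemma shapley_rext_vFO_local p q x :
  (forall k, x \in Auth k -> {in Auth k, p =1 q}) ->
  shapley (rext (vFO Auth w) p) x = shapley (rext (vFO Auth w) q) x.
Proof.
move=> epq; apply: eq_shapley => P xP; rewrite !marginal_rext_vFO //.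
apply: eq_bigr => k xA; congr (_ * (_ * _)).
by apply: eq_bigr => i iA; rewrite (epq k xA i iA).
Qed.

Hypothesis w_ge0 : forall k, 0 <= w k.

Lemma shapley_rext_vFC_antitone p q x :
  (forall i, p i <= q i <= 1) -> 0 <= p x -> p x = q x ->
  shapley (rext (vFC Auth w) q) x <= shapley (rext (vFC Auth w) p) x.
Proof.
move=> lepq px_ge0 pqx; apply: ler_shapley => P xP; rewrite !marginal_rext_vFC //.
apply: ler_sum => k _; apply: (ler_wpM2l (w_ge0 k)); rewrite -pqx.
apply: (ler_wpM2l px_ge0); apply: ler_prod => i _.
by have /andP[pq q1] := lepq i; rewrite subr_ge0 q1 lerB.
Qed.

Lemma shapley_rext_vFO_monotone p q x :
  (forall i, 0 <= p i <= q i) ->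
  shapley (rext (vFO Auth w) p) x <= shapley (rext (vFO Auth w) q) x.
Proof.
move=> lepq; apply: ler_shapley => P xP; rewrite !marginal_rext_vFO //.
apply: ler_sum => k _; apply: (ler_wpM2l (w_ge0 k)).
by apply: ler_wpM2l; [exact: ler0n | apply: ler_prod => i _].
Qed.
End CreditGame.

Theorem theorem8 (R : realFieldType) (n m : nat)
    (Auth : 'I_m -> {set 'I_n}) (w : 'I_m -> R)
    (hw : forall k, 0 <= w k) (x : 'I_n) :
  forall (j : 'I_n) (p q : 'I_n -> R),
    (forall i, 0 <= p i <= 1) -> (forall i, 0 <= q i <= 1) ->
    (forall i, i != j -> p i = q i) ->
    (j \in coauthors Auth x -> p j <= q j ->
       shapley (rext (vFC Auth w) q) x <= shapley (rext (vFC Auth w) p) x /\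
       shapley (rext (vFO Auth w) p) x <= shapley (rext (vFO Auth w) q) x) /\
    (j \notin x |: coauthors Auth x ->
       shapley (rext (vFC Auth w) p) x = shapley (rext (vFC Auth w) q) x /\
       shapley (rext (vFO Auth w) p) x = shapley (rext (vFO Auth w) q) x).
Proof.
move=> j p q p01 q01 epq; split=> [jCx le_pqj | ].
  have jx : j != x by move: jCx; rewrite inE => /andP[].
  have lepq i : p i <= q i by case: (eqVneq i j) => [-> | /epq->].
  split.
    apply: shapley_rext_vFC_antitone => //.
    - by move=> i; rewrite lepq; case/andP: (q01 i).
    - by case/andP: (p01 x).
    - by apply: epq; rewrite eq_sym.
  by apply: shapley_rext_vFO_monotone => // i; rewrite lepq andbT; case/andP: (p01 i).
rewrite in_setU1 negb_or => /andP[jx jCx].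
have epq_papers k : x \in Auth k -> {in Auth k, p =1 q}.
  move=> xA i iA; apply/epq/(contraNneq _ jCx) => ij.
  by rewrite inE jx; apply/existsP; exists k; rewrite xA -ij iA.
by split; [apply: shapley_rext_vFC_local | apply: shapley_rext_vFO_local].
Qed.
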